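(* Let $A$ be a dilation, $X$ a concave ball quasi-Banach function space, $q\in[1,\infty)$, $d\in\mathbb Z_+$ and $s\in(0,1]$. Then $\mathcal L^A_{X,q,d,s}(\mathbb R^n)=\mathcal L^A_{X,q,d}(\mathbb R^n)$ with equivalent quasi-norms.
   Context: A real $n\times n$ matrix $A$ is a dilation if all its eigenvalues have modulus $>1$. Let $b:=|\det A|$. Fix an open ellipsoid $\Delta$ symmetric about the origin with $|\Delta|=1$ and $r>1$ with $\Delta\subset r\Delta\subset A\Delta$; put $B_k:=A^k\Delta$ ($k\in\mathbb Z$) and $\mathcal B:=\{x+B_k:x\in\mathbb R^n,k\in\mathbb Z\}$. Let $\mathscr M(\mathbb R^n)$ be the set of measurable functions. A quasi-normed linear space $X\subset\mathscr M(\mathbb R^n)$ whose quasi-norm is defined on all of $\mathscr M(\mathbb R^n)$ is a ball quasi-Banach function space if: (i) $\|f\|_X=0\Rightarrow f=0$ a.e.; (ii) $|g|\le|f|$ a.e. $\Rightarrow\|g\|_X\le\|f\|_X$; (iii) $0\le f_m\uparrow f$ a.e. $\Rightarrow\|f_m\|_X\uparrow\|f\|_X$; (iv) $\mathbf 1_B\in X$ for all $B\in\mathcal B$. $X$ is concave if there is $C>0$ such that $\sum_{k\in\mathbb N}\|f_k\|_X\le C\|\sum_{k\in\mathbb N}|f_k|\|_X$ for all $\{f_k\}\subset\mathscr M(\mathbb R^n)$. $\mathcal P_d$ denotes polynomials of degree $\le d$; $P^d_Bg$ is the unique $P\in\mathcal P_d$ with $\int_B(g-P)h=0$ for all $h\in\mathcal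 P_d$. $\mathcal L^A_{X,q,d,s}(\mathbb R^n)$ is the set of $f\in L^q_{\mathrm{loc}}$ with $$\|f\|_{\mathcal L^A_{X,q,d,s}}:=\sup\left\|\left\{\sum_{i=1}^m\left[\frac{\lambda_i}{\|\mathbf 1_{B^{(i)}}\|_X}\right]^s\mathbf 1_{B^{(i)}}\right\}^{1/s}\right\|_X^{-1}\sum_{j=1}^m\frac{\lambda_j|B^{(j)}|}{\|\mathbf 1_{B^{(j)}}\|_X}\left[\frac1{|B^{(j)}|}\int_{B^{(j)}}|f-P^d_{B^{(j)}}f|^q\right]^{1/q}<\infty$$ (sup over $m\in\mathbb N$, $B^{(j)}\in\mathcal B$, $\lambda_j\ge0$ with $\sum_j\lambda_j\neq0$). $\mathcal L^A_{X,q,d}(\mathbb R^n)$ is the set of $f\in L^q_{\mathrm{loc}}$ with $\|f\|_{\mathcal L^A_{X,q,d}}:=\sup_{B\in\mathcal B}\frac{|B|}{\|\mathbf 1_B\|_X}\left[\frac1{|B|}\int_B|f-P^d_Bf|^q\right]^{1/q}<\infty$. Elements are identified modulo $\mathcal P_d$. *)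

From HB Require Import structures.
From mathcomp Require Import all_boot all_order all_algebra.
From mathcomp Require Import all_classical all_reals all_analysis.
From mathcomp Require Import complex.

Set Implicit Arguments.
Unset Strict Implicit.
Unset Printing Implicit Defensive.

Import Order.TTheory GRing.Theory Num.Theory.
Import numFieldNormedType.Exports.
Local Open Scope classical_set_scope.
Local Open Scope ring_scope.

Section Defs.
Variable R : realType.
Variable n : nat.

(* Points of R^n are n-tuples of reals; n.-tuple R carries the library's
   product (= Borel) sigma-algebra. *)
Notation pt := (n.-tuple R).

Definition tadd (x y : pt) : pt := [tuple tnth x i + tnth y i | i < n].
Definition tscale (c : R) (x : pt) : pt := [tuple c * tnth x i | i < n].
Definition mxact (M : 'M[R]_n) (x : pt) : pt :=
  [tuple \sum_(j < n) M i j * tnth x j | i < n].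

Definition dilation (A : 'M[R]_n) : Prop :=
  forall l : R[i], eigenvalue (map_mx (fun x : R => (x%:C)%C) A) l -> 1 < `|l|.

Definition sym_open_ellipsoid (D : set pt) : Prop :=
  exists M : 'M[R]_n, \det M != 0 /\
    D = [set x | \sum_(i < n) (tnth (mxact M x) i) ^+ 2 < 1].

Definition image_by (f : pt -> pt) (E : set pt) : set pt := [set f y | y in E].

(* B_k = A^k Delta, k in Z (for k < 0 written as a preimage under A^{-k}) *)
Definition Bk (A : 'M[R]_n) (D : set pt) (k : int) : set pt :=
  match k with
  | Posz m => image_by (iter m (mxact A)) D
  | Negz m => [set x | D (iter m.+1 (mxact A) x)]
  end.

Definition dball (A : 'M[R]_n) (D : set pt) (B : set pt) : Prop :=
  exists (x : pt) (k : int), B = image_by (tadd x) (Bk A D k).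

Definition cube (r : R) : set pt := [set x | forall i, `|tnth x i| <= r].

Definition is_lebesgue (mu : {measure set pt -> \bar R}) : Prop :=
  (forall (a : pt) (E : set pt), measurable E ->
      mu (image_by (tadd a) E) = mu E) /\
  mu [set x | forall i, 0 <= tnth x i < 1] = 1%E.

Local Open Scope ereal_scope.

(* ball quasi-Banach function space; X = { f measurable | normX f < oo } *)
Definition ball_qBfs (mu : {measure set pt -> \bar R}) (A : 'M[R]_n) (D : set pt)
    (normX : (pt -> R) -> \bar R) : Prop :=
  (forall f : pt -> R, 0 <= normX f) /\
  normX (fun _ => 0%R) = 0 /\
  (forall (f : pt -> R) (c : R), measurable_fun setT f -> normX f < +oo ->
      normX (fun x => c * f x)%R = (`|c|)%:E * normX f) /\
  (exists K : R, (1 <= K)%R /\ forall f g : pt -> R,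
      measurable_fun setT f -> measurable_fun setT g ->
      normX f < +oo -> normX g < +oo ->
      normX (fun x => f x + g x)%R <= K%:E * (normX f + normX g)) /\
  (forall f : pt -> R, measurable_fun setT f -> normX f = 0 ->
      {ae mu, forall x, f x = 0%R}) /\
  (forall f g : pt -> R, measurable_fun setT f -> measurable_fun setT g ->
      {ae mu, forall x, `|g x| <= `|f x|}%R -> normX g <= normX f) /\
  (forall (fs : nat -> pt -> R) (f : pt -> R),
      (forall m, measurable_fun setT (fs m)) -> measurable_fun setT f ->
      {ae mu, forall x, (forall m, 0 <= fs m x <= fs m.+1 x)%R /\
                        (fs ^~ x @ \oo --> f x)} ->
      normX (fs m) @[m --> \oo] --> normX f) /\
  (forall B, dball A D B -> normX (\1_B) < +oo).

(* concavity (stated for finite families) *)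
Definition concave_space (normX : (pt -> R) -> \bar R) : Prop :=
  exists C : R, (0 < C)%R /\ forall (N : nat) (f : nat -> pt -> R),
    (forall k, measurable_fun setT (f k)) ->
    \sum_(k < N) normX (f k) <= C%:E * normX (fun x => \sum_(k < N) `|f k x|)%R.

Definition Lqloc (mu : {measure set pt -> \bar R}) (q : R) (f : pt -> R) : Prop :=
  measurable_fun setT f /\
  forall r : R, \int[mu]_(x in cube r) ((`|f x| `^ q)%:E) < +oo.

Definition monom (a : {ffun 'I_n -> nat}) (x : pt) : R :=
  (\prod_(i < n) tnth x i ^+ a i)%R.

Definition polyd (d : nat) (P : pt -> R) : Prop :=
  exists c : {ffun 'I_n -> 'I_d.+1} -> R,
    P = (fun x => \sum_(a : {ffun 'I_n -> 'I_d.+1} | (\sum_(i < n) (a i : nat) <= d)%N)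
                    c a * monom [ffun i => (a i : nat)] x)%R.

Definition is_projPd (mu : {measure set pt -> \bar R}) (d : nat) (B : set pt)
    (g P : pt -> R) : Prop :=
  polyd d P /\ forall h : pt -> R, polyd d h ->
    \int[mu]_(x in B) ((g x - P x) * h x)%R%:E = 0.

Definition projPd (mu : {measure set pt -> \bar R}) (d : nat) (B : set pt)
    (g : pt -> R) : pt -> R :=
  xget (fun _ => 0%R) (is_projPd mu d B g).

Definition osc (mu : {measure set pt -> \bar R}) (q : R) (d : nat) (B : set pt)
    (f : pt -> R) : R :=
  (fine (\int[mu]_(x in B) ((`|f x - projPd mu d B f x| `^ q)%:E))
     / fine (mu B)) `^ q^-1.

Definition normL (mu : {measure set pt -> \bar R}) (A : 'M[R]_n) (D : set pt)
    (normX : (pt -> R) -> \bar R) (q : R) (d : nat) (f : pt -> R) : \bar R :=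
  ereal_sup [set ((fine (mu B) / fine (normX (\1_B))) * osc mu q d B f)%R%:E
             | B in dball A D].

Definition normLs (mu : {measure set pt -> \bar R}) (A : 'M[R]_n) (D : set pt)
    (normX : (pt -> R) -> \bar R) (q : R) (d : nat) (s : R) (f : pt -> R) : \bar R :=
  ereal_sup [set v | exists (m : nat) (B : 'I_m -> set pt) (lam : 'I_m -> R),
    [/\ forall j, dball A D (B j),
        forall j, (0 <= lam j)%R,
        (\sum_(j < m) lam j)%R != 0%R &
        v = ((\sum_(j < m) lam j * fine (mu (B j)) / fine (normX (\1_(B j)))
                              * osc mu q d (B j) f)
             / fine (normX (fun x => (\sum_(i < m)
                   (lam i / fine (normX (\1_(B i)))) `^ s * \1_(B i) x) `^ s^-1)))%R%:E]].

End Defs.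

(* Choosing a single ball (m = 1) in the definition of the s-norm shows
   ||f||_{L_{X,q,d}} <= ||f||_{L_{X,q,d,s}}.  Conversely, fix balls B_j and
   weights lam_j, and put a_j := lam_j / ||1_{B_j}||_X.  The j-th term of the
   numerator is at most ||f||_{L_{X,q,d}} a_j ||1_{B_j}||_X
   = ||f||_{L_{X,q,d}} ||a_j 1_{B_j}||_X, and by concavity of X these add up
   to at most C ||sum_j a_j 1_{B_j}||_X.  Since s <= 1, the l^1 norm is
   dominated by the l^s quasi-norm, so pointwise
   sum_j a_j 1_{B_j} <= (sum_j (a_j 1_{B_j})^s)^{1/s}, and the lattice
   property of X bounds the last norm by the denominator. *)
From mathcomp Require Import all_boot all_order all_algebra.
From mathcomp Require Import all_classical all_reals all_analysis.
From mathcomp Require Import complex.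
From mathcomp.algebra_tactics Require Import lra.

Set Implicit Arguments.
Unset Strict Implicit.
Unset Printing Implicit Defensive.

Import Order.TTheory GRing.Theory Num.Theory.
Local Open Scope classical_set_scope.
Local Open Scope ring_scope.

Lemma iter_can (T : Type) (f g : T -> T) m :
  cancel f g -> cancel (iter m f) (iter m g).
Proof.
move=> fK; elim: m => [//|m IH] x.
by rewrite [iter m.+1 g _]iterSr [iter m.+1 f _]iterS fK IH.
Qed.

Lemma measurable_iter d (T : measurableType d) (f : T -> T) m :
  measurable_fun setT f -> measurable_fun setT (iter m f).
Proof.
move=> mf; elim: m => [|m IH]; first exact: measurable_id.
have -> : iter m.+1 f = f \o iter m f by apply: funext => x; rewrite iterS.
exact: measurableT_comp.
Qed.

Lemma measurable_fun_preimage d d' (T : measurableType d) (U : measurableType d')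
    (f : T -> U) (E : set U) :
  measurable_fun setT f -> measurable E -> measurable (f @^-1` E).
Proof. by move=> mf mE; rewrite -[_ @^-1` _]setTI; exact: mf. Qed.

Section dilated_balls.
Variables (R : realType) (n : nat).
Local Notation pt := (n.-tuple R).

Lemma dilation_det_neq0 (A : 'M[R]_n) : dilation A -> \det A != 0.
Proof.
move=> dA; apply/negP => /eqP detA0.
suff /dA : eigenvalue (map_mx (fun x : R => (x%:C)%C) A) 0.
  by rewrite normr0 ltr10.
have -> : map_mx (fun x : R => (x%:C)%C) A = map_mx (real_complex R) A by [].
rewrite /eigenvalue /eigenspace.
have -> : (0 : complex R)%:M = 0 :> 'M[complex R]_n.
  by apply/matrixP => i j; rewrite !mxE mul0rn.
by rewrite subr0 kermx_eq0 row_free_unit unitmxE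
  det_map_mx detA0 rmorph0 unitr0.
Qed.

Lemma mxactM (M N : 'M[R]_n) (x : pt) :
  mxact M (mxact N x) = mxact (M *m N) x.
Proof.
apply: eq_from_tnth => i; rewrite /mxact !tnth_mktuple.
under eq_bigr => j _ do rewrite tnth_mktuple big_distrr.
rewrite exchange_big /=; apply: eq_bigr => k _.
by rewrite !mxE big_distrl /=; apply: eq_bigr => j _; rewrite mulrA.
Qed.

Lemma mxact1 (x : pt) : mxact 1%:M x = x.
Proof.
apply: eq_from_tnth => i; rewrite /mxact !tnth_mktuple.
rewrite (bigD1 i) //= big1 ?addr0; first by rewrite mxE eqxx mul1r.
by move=> j /negbTE ji; rewrite mxE eq_sym ji mul0r.
Qed.

Lemma mxactK (M : 'M[R]_n) : M \in unitmx -> cancel (mxact M) (mxact (invmx M)).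
Proof. by move=> uM x; rewrite mxactM mulVmx // mxact1. Qed.

Lemma mxactVK (M : 'M[R]_n) : M \in unitmx -> cancel (mxact (invmx M)) (mxact M).
Proof. by move=> uM x; rewrite mxactM mulmxV // mxact1. Qed.

Lemma measurable_mxact (M : 'M[R]_n) : measurable_fun setT (mxact M).
Proof.
apply/measurable_fun_tnthP => i.
have -> : (@tnth n R)^~ i \o mxact M = fun x => \sum_(j < n) M i j * tnth x j.
  by apply: funext => x /=; rewrite tnth_mktuple.
apply: measurable_sum => j.
by apply: measurable_realfun.measurable_funM => //; exact: measurable_tnth.
Qed.

Lemma measurable_tadd (x : pt) : measurable_fun setT (tadd x).
Proof.
apply/measurable_fun_tnthP => i.
have -> : (@tnth n R)^~ i \o tadd x = fun y => tnth x i + tnth y i.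
  by apply: funext => y /=; rewrite tnth_mktuple.
by apply: measurable_realfun.measurable_funD => //; exact: measurable_tnth.
Qed.

Lemma taddK (x : pt) : cancel (tadd x) (tadd [tuple - tnth x i | i < n]).
Proof. by move=> y; apply: eq_from_tnth => i; rewrite !tnth_mktuple addKr. Qed.

Lemma taddNK (x : pt) : cancel (tadd [tuple - tnth x i | i < n]) (tadd x).
Proof. by move=> y; apply: eq_from_tnth => i; rewrite !tnth_mktuple addNKr. Qed.

Lemma image_by_can (f g : pt -> pt) (E : set pt) :
  cancel f g -> cancel g f -> image_by f E = g @^-1` E.
Proof.
move=> fK gK; apply/seteqP; split => [y [x Ex <-]|y Ey] /=; first by rewrite fK.
by exists (g y) => //; rewrite gK.
Qed.

Lemma sym_open_ellipsoid_measurable (D : set pt) :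
  sym_open_ellipsoid D -> measurable D.
Proof.
move=> [M [_ ->]].
pose F := fun x : pt => \sum_(i < n) (tnth (mxact M x) i) ^+ 2.
have mF : measurable_fun setT F.
  apply: measurable_sum => i; apply: measurable_realfun.measurable_funX.
  exact: (measurableT_comp (measurable_tnth i) (measurable_mxact M)).
have -> : [set x | F x < 1] = F @^-1` `]-oo, 1[.
  by apply/seteqP; split => x /=; rewrite in_itv.
exact: measurable_fun_preimage.
Qed.

Lemma dball_measurable (A : 'M[R]_n) (D B : set pt) :
  dilation A -> sym_open_ellipsoid D -> dball A D B -> measurable B.
Proof.
move=> dA eD [x [k ->]].
have mD := sym_open_ellipsoid_measurable eD.
have mBk : measurable (Bk A D k).
  case: k => m /=; last exact: measurable_fun_preimage (measurable_iter m.+1 (measurable_mxact A)) mD.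
  have uA : A \in unitmx by rewrite unitmxE unitfE dilation_det_neq0.
  rewrite (image_by_can _ (iter_can m (mxactK uA)) (iter_can m (mxactVK uA))).
  exact: measurable_fun_preimage (measurable_iter m (measurable_mxact (invmx A))) mD.
rewrite (image_by_can _ (taddK x) (taddNK x)).
exact: measurable_fun_preimage (measurable_tadd _) mBk.
Qed.

End dilated_balls.

Lemma sum_le_powR_sum_powR (R : realType) m (b : 'I_m -> R) (s : R) :
  0 < s <= 1 -> (forall j, 0 <= b j) ->
  \sum_(j < m) b j <= (\sum_(j < m) b j `^ s) `^ s^-1.
Proof.
(* With [c_j := b_j / S] we get [sum_j c_j ^ s = 1], hence [c_j <= 1] and
   therefore [c_j <= c_j ^ s]. *)
move=> /andP[s0 s1] b0; set T := \sum_(j < m) _; set S := T `^ s^-1.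
have T0 : 0 <= T by apply: sumr_ge0 => j _; exact: powR_ge0.
have ST : S `^ s = T by rewrite -powRrM mulVf ?gt_eqF // powRr1.
have [S0|Sgt0] := eqVneq S 0.
  have T00 : T = 0 by rewrite -ST S0 powR0 // gt_eqF.
  rewrite big1 ?powR_ge0 // => j _.
  by apply: (@powR_eq0_eq0 _ _ s); apply: (psumr_eq0P _ T00) => // i _; exact: powR_ge0.
have Spos : 0 < S by rewrite lt_def Sgt0 powR_ge0.
pose c j := b j / S.
have bE j : b j = S * c j by rewrite /c mulrC divfK.
have c0 j : 0 <= c j by rewrite divr_ge0 ?b0 ?ltW.
have sum_cs : \sum_(j < m) c j `^ s = 1.
  apply: (@mulfI _ (S `^ s)); first by rewrite powR_eq0 negb_and Sgt0.
  rewrite mulr1 mulr_sumr [RHS]ST; apply: eq_bigr => j _.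
  by rewrite -powRM ?c0 ?(ltW Spos) // -bE.
have c1 j : c j <= 1.
  have cs1 : c j `^ s <= 1.
    by rewrite -sum_cs (bigD1 j) //= lerDl sumr_ge0 // => i _; exact: powR_ge0.
  rewrite leNgt; apply: contraTN cs1 => c_gt1; rewrite -ltNge.
  by have := @gt0_ltr_powR R s s0 1 (c j); rewrite powR1; apply; rewrite ?nnegrE.
rewrite (eq_bigr _ (fun j _ => bE j)) -mulr_sumr -[leRHS]mulr1 -sum_cs.
apply: ler_wpM2l; first exact: ltW.
apply: ler_sum => j _.
have [->|cj0] := eqVneq (c j) 0; first exact: powR_ge0.
by apply: ger1_powR => //; rewrite lt_def cj0 c0 c1.
Qed.

Lemma concave_sum_ord (R : realType) d (U : measurableType d)
    (normX : (U -> R) -> \bar R) (C : R) :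
  (forall (N : nat) (f : nat -> U -> R), (forall k, measurable_fun setT (f k)) ->
     (\sum_(k < N) normX (f k) <= C%:E * normX (fun x => \sum_(k < N) `|f k x|)%R)%E) ->
  forall m (f : 'I_m -> U -> R), (forall j, measurable_fun setT (f j)) ->
  (\sum_(j < m) normX (f j) <= C%:E * normX (fun x => \sum_(j < m) `|f j x|)%R)%E.
Proof.
move=> conc m f mf.
pose g k := if insub k is Some j then f j else fun=> 0.
have gE (j : 'I_m) : g j = f j by rewrite /g valK.
have mg k : measurable_fun setT (g k).
  by rewrite /g; case: insub => [j|]; [exact: mf | exact: measurable_cst].
have := conc m g mg; under eq_bigr do rewrite gE.
suff -> : (fun x => \sum_(k < m) `|g k x|) = (fun x => \sum_(j < m) `|f j x|) by [].
by apply: funext => x; apply: eq_bigr => j _; rewrite gE.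
Qed.

Section norm_comparison.
Variables (R : realType) (n : nat) (mu : {measure set (n.-tuple R) -> \bar R}).
Variables (A : 'M[R]_n) (D : set (n.-tuple R)) (normX : (n.-tuple R -> R) -> \bar R).
Variables (q : R) (d : nat) (s : R).
Local Notation pt := (n.-tuple R).
Local Open Scope ereal_scope.

Hypothesis normX_ge0 : forall f, 0 <= normX f.
Hypothesis normXZ : forall (f : pt -> R) (c : R), measurable_fun setT f ->
  normX f < +oo -> normX (fun x => c * f x)%R = (`|c|)%:E * normX f.
Hypothesis le_normX : forall f g : pt -> R,
  measurable_fun setT f -> measurable_fun setT g ->
  {ae mu, forall x, `|g x| <= `|f x|}%R -> normX g <= normX f.
Hypothesis normX_indic_lty : forall B, dball A D B -> normX (\1_B) < +oo.
Hypothesis dball_meas : forall B, dball A D B -> measurable B.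

Lemma measurable_indic_dball B :
  dball A D B -> measurable_fun setT (\1_B : pt -> R).
Proof. by move=> dB; apply: measurable_realfun.measurable_indic; exact: dball_meas. Qed.

Lemma normX_indicE B : dball A D B -> normX (\1_B) = (fine (normX (\1_B)))%:E.
Proof. by move=> dB; rewrite fineK // ge0_fin_numE // normX_indic_lty. Qed.

Lemma normX_scale_indic (a : R) B : (0 <= a)%R -> dball A D B ->
  normX (fun x => a * \1_B x)%R = (a * fine (normX (\1_B)))%:E.
Proof.
move=> a0 dB.
rewrite normXZ; [|exact: measurable_indic_dball|exact: normX_indic_lty].
by rewrite {1}normX_indicE // ger0_norm // -EFinM.
Qed.

Lemma normL_ge0 f : 0 <= normL mu A D normX q d f.
Proof.
pose B0 := image_by (tadd [tuple 0%R | _ < n]) (Bk A D 0).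
have dB0 : dball A D B0 by exists [tuple 0%R | _ < n], 0%R.
apply: le_trans (ereal_sup_ubound _); last by exists B0.
rewrite lee_fin mulr_ge0 ?powR_ge0 // divr_ge0 // fine_ge0 //.
Qed.

Lemma normL_le_normLs f : (0 < s)%R ->
  normL mu A D normX q d f <= normLs mu A D normX q d s f.
Proof.
move=> s0; apply: ereal_sup_le => _ [B dB <-].
exists 1%N, (fun _ => B), (fun _ => 1%R); split => //; first by rewrite big_ord1 oner_neq0.
set NB := fine (normX (\1_B)); have NB0 : (0 <= NB)%R by exact: fine_ge0.
(* with [x / 0 = 0], a ball with [normX 1_B = 0] contributes 0 to both sides *)
have [->|NBn0] := eqVneq NB 0%R; first by rewrite invr0 big_ord1 !mulr0 !mul0r.
have -> : (fun x => (\sum_(i < 1) (1 / NB) `^ s * \1_B x) `^ s^-1)%R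
          = (fun x => NB^-1 * \1_B x)%R.
  apply: funext => x; rewrite big_ord1 indicE div1r.
  case: (x \in B) => /=; last by rewrite !mulr0 powR0 // invr_eq0 gt_eqF.
  by rewrite !mulr1 -powRrM mulfV ?gt_eqF // powRr1 // invr_ge0.
rewrite big_ord1 normX_scale_indic ?invr_ge0 // -/NB mulVf //.
by rewrite mul1r [fine 1]/= divr1.
Qed.

Lemma normX_sum_indic_le m (a : 'I_m -> R) (B : 'I_m -> set pt) :
  (0 < s <= 1)%R -> (forall j, 0 <= a j)%R -> (forall j, dball A D (B j)) ->
  normX (fun x => \sum_(j < m) a j * \1_(B j) x)%R
    <= normX (fun x => (\sum_(j < m) a j `^ s * \1_(B j) x) `^ s^-1)%R.
Proof.
move=> /andP[s0 s1] a0 dB.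
have mB j := measurable_indic_dball (dB j).
apply: le_normX.
- apply: (measurableT_comp (measurable_realfun.measurable_powR _)).
  by apply: measurable_sum => j; exact: measurable_realfun.measurable_funM.
- by apply: measurable_sum => j; exact: measurable_realfun.measurable_funM.
apply: aeW => x; rewrite (ger0_norm (powR_ge0 _ _)) ger0_norm; last first.
  by apply: sumr_ge0 => j _; rewrite mulr_ge0 // indicE.
have -> : (\sum_(j < m) a j `^ s * \1_(B j) x = \sum_(j < m) (a j * \1_(B j) x) `^ s)%R.
  apply: eq_bigr => j _; rewrite indicE.
  by case: (x \in B j); rewrite /= ?mulr1 // !mulr0 powR0 // gt_eqF.
by apply: sum_le_powR_sum_powR => [|j]; rewrite ?s0 ?s1 // mulr_ge0 // indicE.
Qed.

Variable C : R.
Hypothesis C_gt0 : (0 < C)%R.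
Hypothesis normX_concave : forall (N : nat) (f : nat -> pt -> R),
  (forall k, measurable_fun setT (f k)) ->
  \sum_(k < N) normX (f k) <= C%:E * normX (fun x => \sum_(k < N) `|f k x|)%R.

Lemma sum_normX_indic_le m (a : 'I_m -> R) (B : 'I_m -> set pt) :
  (forall j, 0 <= a j)%R -> (forall j, dball A D (B j)) ->
  (\sum_(j < m) a j * fine (normX (\1_(B j))))%:E
    <= C%:E * normX (fun x => \sum_(j < m) a j * \1_(B j) x)%R.
Proof.
move=> a0 dB.
have mB j : measurable_fun setT (fun x => a j * \1_(B j) x)%R.
  by apply: measurable_realfun.measurable_funM => //; exact: measurable_indic_dball.
have := concave_sum_ord normX_concave mB.
under eq_bigr do rewrite normX_scale_indic //.
rewrite sumEFin; suff -> : (fun x => \sum_(j < m) `|a j * \1_(B j) x|)%R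
                       = (fun x => \sum_(j < m) a j * \1_(B j) x)%R by [].
by apply: funext => x; apply: eq_bigr => j _; rewrite ger0_norm // mulr_ge0 // indicE.
Qed.

Lemma normLs_le_normL f : (0 < s <= 1)%R ->
  normLs mu A D normX q d s f <= C%:E * normL mu A D normX q d f.
Proof.
move=> s01.
have ball_le B : dball A D B ->
    ((fine (mu B) / fine (normX (\1_B))) * osc mu q d B f)%:E <= normL mu A D normX q d f.
  by move=> dB; apply: ereal_sup_ubound; exists B.
move: (normL_ge0 f) ball_le; case: (normL _ _ _ _ _ _ _) => [L| |] // L0 ball_le;
  last by rewrite gt0_muley ?leey ?lte_fin.
apply: ge_ereal_sup => _ [m [B [lam [dB lam0 _ ->]]]].
rewrite -EFinM lee_fin; set g := (fun x => _) : pt -> R; set G := fine (normX g).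
pose a j := (lam j / fine (normX (\1_(B j))))%R.
have a0 j : (0 <= a j)%R by rewrite divr_ge0 // fine_ge0.
have num_le : (\sum_(j < m) lam j * fine (mu (B j)) / fine (normX (\1_(B j)))
                 * osc mu q d (B j) f <= L * \sum_(j < m) a j * fine (normX (\1_(B j))))%R.
  rewrite mulr_sumr; apply: ler_sum => j _; rewrite /a.
  have [->|Nj0] := eqVneq (fine (normX (\1_(B j)))) 0%R; first by rewrite invr0 !mulr0 mul0r.
  rewrite mulfVK // -!mulrA mulrC ler_wpM2r // mulrA -lee_fin.
  exact: ball_le.
(* [G = 0] also when the denominator norm is infinite; the quotient is then 0. *)
have [G0|Gn0] := eqVneq G 0%R; first by rewrite G0 invr0 mulr0 mulr_ge0 // ltW.
have Gpos : (0 < G)%R by rewrite lt_def Gn0 fine_ge0.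
have gE : normX g = G%:E.
  rewrite /G fineK // ge0_fin_numE // ltNge leye_eq.
  by apply: contra Gn0 => /eqP gy; rewrite /G gy.
have sum_le : (\sum_(j < m) a j * fine (normX (\1_(B j))) <= C * G)%R.
  rewrite -lee_fin EFinM -gE; apply: le_trans (sum_normX_indic_le a0 dB) _.
  by rewrite lee_pmul2l ?lte_fin // normX_sum_indic_le.
rewrite ler_pdivrMr //; apply: le_trans num_le _.
by rewrite [(L * _)%R]mulrC [(C * L * G)%R]mulrAC ler_wpM2r // -lee_fin.
Qed.

End norm_comparison.

Theorem proposition3p9 (R : realType) (n : nat)
    (mu : {measure set (n.-tuple R) -> \bar R})
    (A : 'M[R]_n) (D : set (n.-tuple R)) (r : R)
    (normX : (n.-tuple R -> R) -> \bar R) (q : R) (d : nat) (s : R) :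
  (0 < n)%N ->
  is_lebesgue mu ->
  dilation A ->
  sym_open_ellipsoid D -> mu D = 1%E ->
  1 < r -> D `<=` image_by (tscale r) D ->
  image_by (tscale r) D `<=` image_by (mxact A) D ->
  ball_qBfs mu A D normX -> concave_space normX ->
  1 <= q -> 0 < s <= 1 ->
  (forall f, Lqloc mu q f ->
     ((normLs mu A D normX q d s f < +oo)%E <-> (normL mu A D normX q d f < +oo)%E)) /\
  exists C : R, 0 < C /\ forall f, Lqloc mu q f ->
     (normLs mu A D normX q d s f <= C%:E * normL mu A D normX q d f)%E /\
     (normL mu A D normX q d f <= C%:E * normLs mu A D normX q d s f)%E.
Proof.
move=> _ _ dA eD _ _ _ _ [nX0 [_ [nXZ [_ [_ [le_nX [_ nX1]]]]]]] [C [C0 conc]] _ s01.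
have /andP[s0 _] := s01.
have dB_meas B := @dball_measurable R n A D B dA eD.
have L0 := normL_ge0 mu A D q d nX0.
have Lle f := normL_le_normLs mu q d nX0 nXZ nX1 dB_meas f s0.
have Lsle f := normLs_le_normL q d nX0 nXZ le_nX nX1 dB_meas C0 conc f s01.
split=> [f _|].
  split=> [/(le_lt_trans (Lle f))//|Lf].
  by apply: le_lt_trans (Lsle f) _; rewrite lte_mul_pinfty // lee_fin ltW.
exists (C + 1); split=> [|f _]; first lra.
split.
  apply: le_trans (Lsle f) _; apply: lee_wpmul2r => //; rewrite lee_fin; lra.
apply: le_trans (Lle f) _; rewrite -{1}(mul1e (normLs _ _ _ _ _ _ _ _)).
apply: lee_wpmul2r; first exact: le_trans (L0 f) (Lle f).
by rewrite lee_fin; lra.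
Qed.
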